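(* Let $(X,d)$ be a metric space and $\emptyset\neq A\subseteq X$. (i) If $\alpha:\mathbb{N}\to\mathbb{N}$ is a I-modulus of total boundedness for $A$, then $\gamma(k):=\alpha(2k+1)+1$ is a II-modulus of total boundedness for $A$. (ii) If $\gamma:\mathbb{N}\to\mathbb{N}$ is a II-modulus of total boundedness for $A$, then $\alpha(k):=\gamma(k)-1$ is a I-modulus of total boundedness for $A$ (in particular, $A$ is totally bounded).
   Context: $\mathbb{N}$ includes $0$. A map $\alpha:\mathbb{N}\to\mathbb{N}$ is a I-modulus of total boundedness for $A$ if for every $k\in\mathbb{N}$ there exist $a_0,\dots,a_{\alpha(k)}\in X$ such that for every $x\in A$ there is $0\le i\le\alpha(k)$ with $d(x,a_i)\le \frac1{k+1}$. A map $\gamma:\mathbb{N}\to\mathbb{N}$ is a II-modulus of total boundedness for $A$ if for every $k\in\mathbb{N}$ and every sequence $(x_n)$ in $A$ there exist $0\le i<j\le\gamma(k)$ with $d(x_i,x_j)\le\frac1{k+1}$. *)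

From Stdlib Require Export Reals.
Open Scope R_scope.

Definition is_metric {X : Type} (d : X -> X -> R) : Prop :=
  (forall x y, 0 <= d x y) /\
  (forall x y, d x y = 0 <-> x = y) /\
  (forall x y, d x y = d y x) /\
  (forall x y z, d x z <= d x y + d y z).

Definition I_modulus {X : Type} (d : X -> X -> R) (A : X -> Prop)
    (alpha : nat -> nat) : Prop :=
  forall k : nat, exists a : nat -> X,
    forall x, A x -> exists i : nat, (i <= alpha k)%nat /\
      d x (a i) <= 1 / (INR k + 1).

Definition II_modulus {X : Type} (d : X -> X -> R) (A : X -> Prop)
    (gamma : nat -> nat) : Prop :=
  forall (k : nat) (x : nat -> X), (forall n, A (x n)) ->
    exists i j : nat, (i < j)%nat /\ (j <= gamma k)%nat /\
      d (x i) (x j) <= 1 / (INR k + 1).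

(* (i) Cover A by the alpha(2k+1)+1 balls of radius 1/(2k+2); among alpha(2k+1)+2 points
   of A two fall into the same ball (pigeonhole), hence lie within 1/(k+1).
   (ii) If no gamma(k) points of X form a 1/(k+1)-net of A, a greedy choice produces a
   sequence in A whose terms are pairwise more than 1/(k+1) apart, which a II-modulus
   forbids. *)
From Stdlib Require Import Reals Lra Lia List Classical ClassicalEpsilon.
Open Scope R_scope.

Lemma pigeonhole (m : nat) (c : nat -> nat) :
  (forall n, (n <= S m)%nat -> (c n <= m)%nat) ->
  exists i j, (i < j)%nat /\ (j <= S m)%nat /\ c i = c j.
Proof.
  intros Hc. apply NNPP. intros Hinj.
  set (l := map c (seq 0 (S (S m)))).
  assert (Hlen : length l = S (S m)) by (unfold l; rewrite length_map, length_seq; reflexivity).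
  assert (Hnd : NoDup l).
  { apply (NoDup_nth l (c 0%nat)). rewrite Hlen. intros i j Hi Hj Heq.
    unfold l in Heq. rewrite !map_nth, !seq_nth in Heq by assumption.
    destruct (Nat.lt_trichotomy i j) as [Hlt | [Hij | Hgt]]; [| exact Hij |];
      exfalso; apply Hinj; eauto 6 with arith. }
  assert (Hincl : incl l (seq 0 (S m))).
  { intros y Hy. apply in_map_iff in Hy as [n [<- Hn]].
    apply in_seq in Hn. apply in_seq. specialize (Hc n). lia. }
  pose proof (NoDup_incl_length Hnd Hincl) as Hle.
  rewrite Hlen, length_seq in Hle. lia.
Qed.

Section MetricFacts.

Context {X : Type} {d : X -> X -> R} {A : X -> Prop}.
Hypothesis d_sym : forall x y, d x y = d y x.
Hypothesis d_triangle : forall x y z, d x z <= d x y + d y z.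

Lemma net_close_pair (eps : R) (N : nat) (a : nat -> X) :
  (forall x, A x -> exists i, (i <= N)%nat /\ d x (a i) <= eps) ->
  forall x : nat -> X, (forall n, A (x n)) ->
  exists i j, (i < j)%nat /\ (j <= S N)%nat /\ d (x i) (x j) <= 2 * eps.
Proof.
  intros Hnet x Hx.
  destruct (choice (fun n i => (i <= N)%nat /\ d (x n) (a i) <= eps))
    as [c Hc]; [intro n; exact (Hnet _ (Hx n)) |].
  destruct (pigeonhole N c) as [i [j [Hij [Hj Hcij]]]]; [intros n _; apply Hc |].
  exists i, j. repeat split; try assumption.
  destruct (Hc i) as [_ Hi], (Hc j) as [_ Hj'].
  rewrite <- Hcij, d_sym in Hj'.
  pose proof (d_triangle (x i) (a (c i)) (x j)). lra.
Qed.

(* [greedy F x0 n] holds the first [n] terms of the sequence [n |-> F (greedy F x0 n)];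
   the values at indices [>= n] are padding and must be ignored by [F]. *)
Fixpoint greedy (F : (nat -> X) -> X) (x0 : X) (n : nat) : nat -> X :=
  match n with
  | O => fun _ => x0
  | S n' => fun i => if Nat.ltb i n' then greedy F x0 n' i else F (greedy F x0 n')
  end.

Lemma greedy_prefix F x0 i m :
  (i < m)%nat -> greedy F x0 m i = F (greedy F x0 i).
Proof.
  induction m as [|m IH]; intros Him; [lia |].
  simpl. destruct (Nat.ltb i m) eqn:E.
  - apply Nat.ltb_lt in E. auto.
  - apply Nat.ltb_ge in E. replace i with m by lia. reflexivity.
Qed.

Lemma net_of_close_pairs (eps : R) (N : nat) :
  (exists x, A x) ->
  (forall x : nat -> X, (forall n, A (x n)) ->
     exists i j, (i < j)%nat /\ (j <= S N)%nat /\ d (x i) (x j) <= eps) ->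
  exists a : nat -> X, forall x, A x -> exists i, (i <= N)%nat /\ d x (a i) <= eps.
Proof.
  intros [x0 _] Hpair. apply NNPP. intros Hnonet.
  assert (Hfar : forall a : nat -> X,
            exists y, A y /\ forall i, (i <= N)%nat -> eps < d y (a i)).
  { intros a. apply NNPP. intros Hnone. apply Hnonet. exists a. intros y Hy.
    apply NNPP. intros Hy_far. apply Hnone. exists y. split; [exact Hy |].
    intros i Hi. apply Rnot_le_lt. intros Hle. apply Hy_far. eauto. }
  destruct (choice _ Hfar) as [F HF].
  set (x := fun n => F (greedy F x0 n)).
  destruct (Hpair x (fun n => proj1 (HF _))) as [i [j [Hij [Hj Hd]]]].
  pose proof (proj2 (HF (greedy F x0 j)) i ltac:(lia)) as Hji.
  rewrite greedy_prefix, d_sym in Hji by exact Hij.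
  unfold x in Hd. lra.
Qed.

End MetricFacts.

Lemma double_inv_succ_double (k : nat) :
  2 * (1 / (INR (2 * k + 1) + 1)) = 1 / (INR k + 1).
Proof.
  rewrite plus_INR, mult_INR. simpl INR.
  pose proof (pos_INR k). field. lra.
Qed.

Theorem proposition2p4 (X : Type) (d : X -> X -> R) (A : X -> Prop) :
  is_metric d -> (exists x, A x) ->
  (forall alpha : nat -> nat, I_modulus d A alpha ->
     II_modulus d A (fun k => (alpha (2 * k + 1) + 1)%nat)) /\
  (forall gamma : nat -> nat, II_modulus d A gamma ->
     I_modulus d A (fun k => (gamma k - 1)%nat)).
Proof.
  intros [_ [_ [d_sym d_triangle]]] HA. split.
  - intros alpha Halpha k x Hx.
    destruct (Halpha (2 * k + 1)%nat) as [a Hnet].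
    destruct (net_close_pair d_sym d_triangle _ _ _ Hnet x Hx) as [i [j [Hij [Hj Hd]]]].
    rewrite double_inv_succ_double in Hd.
    exists i, j. repeat split; [exact Hij | lia | exact Hd].
  - intros gamma Hgamma k.
    apply (net_of_close_pairs d_sym _ _ HA). intros x Hx.
    destruct (Hgamma k x Hx) as [i [j [Hij [Hj Hd]]]].
    (* [0 < j <= gamma k] makes the truncated [gamma k - 1] harmless. *)
    exists i, j. repeat split; [exact Hij | lia | exact Hd].
Qed.
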